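(* Let $F:\mathbb{R}^n\to\mathbb{R}$ be a convex differentiable function and assume there exists a minimizer $x_*$ of $F$. Let $\xi^{(1)},\dots,\xi^{(T)}$ be i.i.d. random variables. Let $\mu_x,\mu_y\in[0,1)$, and let $z^{(1)},\dots,z^{(T)}$ be arbitrary (random) iterates produced by a base optimizer, with the Generalized Primal Averaging sequences defined by $x^{(1)}=z^{(1)}$ and $$y^{(t)}=\mu_y x^{(t)}+(1-\mu_y)z^{(t)},\qquad x^{(t+1)}=\mu_x x^{(t)}+(1-\mu_x)z^{(t+1)}.$$ Let $\bar{x}^{(T)}=\frac1T\sum_{t=1}^T x^{(t)}$. Then $$\mathbb{E}[F(\bar{x}^{(T)})-F(x_* )]\le \frac1T\sum_{t=1}^T\mathbb{E}[\langle\nabla F(y^{(t)}),z^{(t)}-x_*\rangle]+\frac{\mu_x}{1-\mu_x}\frac1T\mathbb{E}[F(x^{(1)})-F(x_* )]$$ $$-\frac{1}{1-\mu_y}\frac1T\sum_{t=1}^T\mathbb{E}[B_F(y^{(t)},x^{(t)})]-\frac{\mu_y}{1-\mu_y}\frac1T\sum_{t=1}^T\mathbb{E}[B_F(x^{(t)},y^{(t)})]-\frac{\mu_x}{1-\mu_x}\frac1T\sum_{t=1}^T\mathbb{E}[B_F(x^{(t-1)},x^{(t)})],$$ with the convention $x^{(0)}:=x^{(1)}$.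
   Context: $B_F(a,b)=F(a)-F(b)-\langle\nabla F(b),a-b\rangle$ denotes the Bregman divergence of $F$, for $a,b\in\mathbb{R}^n$. The iterates $z^{(t)}$ are random (depending on the samples $\xi^{(t)}$) and all expectations are assumed finite. *)

From mathcomp Require Import all_boot all_order all_algebra.
From mathcomp Require Import all_classical all_reals all_analysis.
Set Implicit Arguments. Unset Strict Implicit. Unset Printing Implicit Defensive.
Import Order.TTheory GRing.Theory Num.Theory.
Import numFieldNormedType.Exports.
Local Open Scope ring_scope.

Definition dotp {R : realType} {n : nat} (a b : 'rV[R]_n) : R :=
  \sum_(i < n) a ord0 i * b ord0 i.

Definition basis_vec {R : realType} {n : nat} (i : 'I_n) : 'rV[R]_n :=
  \row_(j < n) (i == j)%:R.

Definition grad {R : realType} {n : nat} (F : 'rV[R]_n -> R) (x : 'rV[R]_n)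
  : 'rV[R]_n := \row_(i < n) derive F x (basis_vec i).

Definition bregman {R : realType} {n : nat} (F : 'rV[R]_n -> R) (a b : 'rV[R]_n)
  : R := F a - F b - dotp (grad F b) (a - b).

Definition convex_fun {R : realType} {n : nat} (F : 'rV[R]_n -> R) : Prop :=
  forall (x y : 'rV[R]_n) (l : R), 0 <= l -> l <= 1 ->
    F (l *: x + (1 - l) *: y) <= l * F x + (1 - l) * F y.

Definition is_minimizer {R : realType} {n : nat} (F : 'rV[R]_n -> R)
  (xs : 'rV[R]_n) : Prop := forall x, F xs <= F x.

(* Generalized Primal Averaging sequence, indexed so that gpa_x mux z t = x^(t)
   for t >= 1, with the convention x^(0) := x^(1) = z^(1). *)
Fixpoint gpa_x {R : realType} {n : nat} (mux : R) (z : nat -> 'rV[R]_n)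
  (t : nat) : 'rV[R]_n :=
  match t with
  | 0 => z 1%N
  | 1 => z 1%N
  | t'.+1 => mux *: gpa_x mux z t' + (1 - mux) *: z t
  end.

Definition gpa_y {R : realType} {n : nat} (mux muy : R) (z : nat -> 'rV[R]_n)
  (t : nat) : 'rV[R]_n := muy *: gpa_x mux z t + (1 - muy) *: z t.

Definition gpa_xbar {R : realType} {n : nat} (mux : R) (z : nat -> 'rV[R]_n)
  (T : nat) : 'rV[R]_n := T%:R^-1 *: \sum_(1 <= t < T.+1) gpa_x mux z t.

From mathcomp Require Import all_boot all_order all_algebra.
From mathcomp Require Import all_classical all_reals all_analysis.
From mathcomp Require Import lra ring.
Set Implicit Arguments. Unset Strict Implicit. Unset Printing Implicit Defensive.
Import Order.TTheory GRing.Theory Num.Theory.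
Import numFieldNormedType.Exports.
Local Open Scope ring_scope.

(* Write X_t = x^(t), Y_t = y^(t) and a = mu_x/(1-mu_x), b = mu_y/(1-mu_y),
   c = 1/(1-mu_y). The two recursions express z_t as an affine combination of
   X_{t-1}, X_t and Y_t, and expanding the definitions of the Bregman
   divergences gives the exact identity
     <grad F(Y_t), z_t - x⋆> = F(X_t) - F(x⋆) + a (F(X_t) - F(X_{t-1}))
        + a B(X_{t-1}, X_t) + c B(Y_t, X_t) + b B(X_t, Y_t) + B(x⋆, Y_t).
   Summing over t, the differences F(X_t) - F(X_{t-1}) telescope to
   F(X_T) - F(X_1) >= F(x⋆) - F(X_1), the divergence B(x⋆, Y_t) is
   nonnegative by convexity, and Jensen's inequality bounds F of the average
   by the average of the F(X_t). This holds for every sample path, and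
   expectation is linear and monotone on integrable functions. *)

Section inner_product.
Variables (R : realType) (n : nat).
Implicit Types (g u v : 'rV[R]_n).

Lemma dotpD g u v : dotp g (u + v) = dotp g u + dotp g v.
Proof. by rewrite /dotp -big_split; apply: eq_bigr => i _; rewrite mxE mulrDr. Qed.

Lemma dotpN g u : dotp g (- u) = - dotp g u.
Proof. by rewrite /dotp -sumrN; apply: eq_bigr => i _; rewrite mxE mulrN. Qed.

Lemma dotpZ g u (k : R) : dotp g (k *: u) = k * dotp g u.
Proof. by rewrite /dotp mulr_sumr; apply: eq_bigr => i _; rewrite mxE mulrCA. Qed.

Lemma basis_vec_delta_mx (i : 'I_n) : basis_vec i = delta_mx 0 i :> 'rV[R]_n.
Proof. by apply/rowP => j; rewrite !mxE eqxx /= eq_sym. Qed.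

End inner_product.

Lemma derive_le_secant (R : realType) (V : normedModType R) (f : V -> R)
    (b v : V) (M : R) : derivable f b v ->
    (forall h : R, 0 < h < 1 -> h^-1 * (f (h *: v + b) - f b) <= M) ->
  derive f b v <= M.
Proof.
move=> df secM; rewrite /derive cvg_at_rightE //; apply: limr_le.
  by apply/cvg_ex; eexists; exact: cvg_dnbhs_at_right df.
near=> h; apply: secM; apply/andP; split.
  by near: h; exact: nbhs_right_gt.
by near: h; exact: nbhs_right_lt.
Unshelve. all: by end_near.
Qed.

Section convex_differentiable.
Variables (R : realType) (n : nat) (F : 'rV[R]_n -> R).
Implicit Types (a b v : 'rV[R]_n).

Lemma dotp_grad b v : differentiable F b -> dotp (grad F b) v = derive F b v.
Proof.
move=> dFb; rewrite deriveE // [in RHS](row_sum_delta v) linear_sum.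
apply: eq_bigr => i _; rewrite linearZ /= mxE deriveE // basis_vec_delta_mx.
by rewrite mulrC.
Qed.

Hypothesis cvxF : convex_fun F.

Lemma convex_fun_secant_le a b (h : R) : 0 < h -> h <= 1 ->
  h^-1 * (F (h *: (a - b) + b) - F b) <= F a - F b.
Proof.
move=> h0 h1; rewrite ler_pdivrMl //.
have -> : h *: (a - b) + b = h *: a + (1 - h) *: b.
  by rewrite scalerBr scalerBl scale1r addrAC addrA.
have := @cvxF a b h (ltW h0) h1; lra.
Qed.

Lemma bregman_ge0 a b : differentiable F b -> 0 <= bregman F a b.
Proof.
move=> dFb; rewrite /bregman dotp_grad // subr_ge0.
apply: derive_le_secant; first exact: diff_derivable.
by move=> h /andP[h0 h1]; apply: convex_fun_secant_le => //; exact: ltW.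
Qed.

Lemma convex_fun_mean_le (v : nat -> 'rV[R]_n) (k : nat) : (0 < k)%N ->
  F (k%:R^-1 *: \sum_(1 <= t < k.+1) v t) <= k%:R^-1 * \sum_(1 <= t < k.+1) F (v t).
Proof.
elim: k => // -[_ _|k IH _]; first by rewrite !big_nat1 invr1 scale1r mul1r.
rewrite big_nat_recr //= [X in _ <= _ * X]big_nat_recr //=.
set S := \sum_(1 <= t < k.+2) v t; set SF := \sum_(1 <= t < k.+2) F (v t).
have k1 : 0 < k.+1%:R :> R by rewrite ltr0n.
set l := k.+2%:R^-1 : R.
have l0 : 0 <= l by rewrite invr_ge0.
have l1 : l <= 1 by rewrite invf_le1 ?ltr0n // ler1n.
have weights : (1 - l) * k.+1%:R^-1 = l.
  by rewrite /l -natr1; field; apply/andP; split; apply: lt0r_neq0; lra.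
have -> : l *: (S + v k.+2) = l *: v k.+2 + (1 - l) *: (k.+1%:R^-1 *: S).
  by rewrite scalerA weights scalerDr addrC.
have -> : l * (SF + F (v k.+2)) = l * F (v k.+2) + (1 - l) * (k.+1%:R^-1 * SF).
  by rewrite mulrA weights mulrDr addrC.
apply: le_trans (@cvxF _ _ _ l0 l1) _.
by rewrite lerD2l ler_wpM2l ?subr_ge0 //; exact: IH.
Qed.

End convex_differentiable.

Lemma dotp_grad_gpa_identity (R : realType) (n : nat) (F : 'rV[R]_n -> R)
    (xs Xp zt X Y : 'rV[R]_n) (mux muy : R) : mux != 1 -> muy != 1 ->
    X = mux *: Xp + (1 - mux) *: zt -> Y = muy *: X + (1 - muy) *: zt ->
  dotp (grad F Y) (zt - xs) =
    F X - F xs + mux / (1 - mux) * (F X - F Xp)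
    + mux / (1 - mux) * bregman F Xp X + (1 - muy)^-1 * bregman F Y X
    + muy / (1 - muy) * bregman F X Y + bregman F xs Y.
Proof.
move=> mux1 muy1 eX eY; rewrite /bregman.
move: (grad F Y) (grad F X) (F X) (F Y) => gY gX FX FY.
rewrite eY eX !(dotpD, dotpN, dotpZ).
have mux1' : 1 - mux != 0 by rewrite subr_eq0 eq_sym.
have muy1' : 1 - muy != 0 by rewrite subr_eq0 eq_sym.
by field; rewrite mux1' muy1'.
Qed.

Section gpa_pathwise.
Variables (R : realType) (n : nat) (F : 'rV[R]_n -> R) (xs : 'rV[R]_n).
Hypotheses (cvxF : convex_fun F) (dF : forall x, differentiable F x)
  (minF : is_minimizer F xs).
Variables (mux muy : R) (z : nat -> 'rV[R]_n).
Hypotheses (hmux : 0 <= mux < 1) (hmuy : 0 <= muy < 1).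

Local Notation X := (gpa_x mux z).
Local Notation Y := (gpa_y mux muy z).
Local Notation a := (mux / (1 - mux)).
Local Notation b := (muy / (1 - muy)).
Local Notation c := ((1 - muy)^-1).

Lemma gpa_xE t : (1 <= t)%N -> X t = mux *: X t.-1 + (1 - mux) *: z t.
Proof. by case: t => // -[|t] _ //=; rewrite -scalerDl addrC subrK scale1r. Qed.

Lemma sum_gpa_gap_le (T : nat) :
  \sum_(1 <= t < T.+1) (F (X t) - F xs) <=
    \sum_(1 <= t < T.+1) dotp (grad F (Y t)) (z t - xs)
    + a * (F (X 1) - F xs)
    - c * \sum_(1 <= t < T.+1) bregman F (Y t) (X t)
    - b * \sum_(1 <= t < T.+1) bregman F (X t) (Y t)
    - a * \sum_(1 <= t < T.+1) bregman F (X t.-1) (X t).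
Proof.
have [mux0 mux1] := andP hmux; have [muy0 muy1] := andP hmuy.
have a0 : 0 <= a by rewrite divr_ge0 // subr_ge0 ltW.
have expand : \sum_(1 <= t < T.+1) dotp (grad F (Y t)) (z t - xs) =
    \sum_(1 <= t < T.+1) (F (X t) - F xs)
    + a * \sum_(1 <= t < T.+1) (F (X t) - F (X t.-1))
    + a * \sum_(1 <= t < T.+1) bregman F (X t.-1) (X t)
    + c * \sum_(1 <= t < T.+1) bregman F (Y t) (X t)
    + b * \sum_(1 <= t < T.+1) bregman F (X t) (Y t)
    + \sum_(1 <= t < T.+1) bregman F xs (Y t).
  rewrite !mulr_sumr -!big_split; apply: eq_big_nat => t /andP[t1 _].
  apply: dotp_grad_gpa_identity => //; last exact: gpa_xE.
  1,2: by rewrite lt_eqF.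
have telescope : \sum_(1 <= t < T.+1) (F (X t) - F (X t.-1)) = F (X T) - F (X 1).
  by rewrite big_add1 /= (telescope_sumr (fun t => F (X t))).
have drift : a * (F xs - F (X 1)) <= a * (F (X T) - F (X 1)).
  by rewrite ler_wpM2l // lerD2r minF.
have B0 : 0 <= \sum_(1 <= t < T.+1) bregman F xs (Y t).
  by apply: sumr_ge0 => t _; exact: bregman_ge0.
rewrite expand telescope; move: drift B0; rewrite !mulrBr; lra.
Qed.

Lemma gpa_pathwise_bound (T : nat) : (0 < T)%N ->
  F (gpa_xbar mux z T) - F xs <=
     T%:R^-1 * (\sum_(1 <= t < T.+1) dotp (grad F (Y t)) (z t - xs))
   + (a * T%:R^-1) * (F (X 1) - F xs)
   - (c * T%:R^-1) * (\sum_(1 <= t < T.+1) bregman F (Y t) (X t))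
   - (b * T%:R^-1) * (\sum_(1 <= t < T.+1) bregman F (X t) (Y t))
   - (a * T%:R^-1) * (\sum_(1 <= t < T.+1) bregman F (X t.-1) (X t)).
Proof.
move=> T0; have T0' : 0 < T%:R :> R by rewrite ltr0n.
have jensen : F (gpa_xbar mux z T) - F xs <=
    T%:R^-1 * \sum_(1 <= t < T.+1) (F (X t) - F xs).
  rewrite sumrB big_const_nat iter_addr addr0 subn1 /= mulrBr.
  rewrite -[F xs *+ T]mulr_natr mulrCA mulVf ?mulr1 ?lt0r_neq0 // lerD2r.
  exact: convex_fun_mean_le.
apply: le_trans jensen _.
have -> : forall s1 s2 s3 s4 s5 : R,
   T%:R^-1 * s1 + a * T%:R^-1 * s2 - c * T%:R^-1 * s3 - b * T%:R^-1 * s4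
     - a * T%:R^-1 * s5
   = T%:R^-1 * (s1 + a * s2 - c * s3 - b * s4 - a * s5) by move=> *; ring.
by rewrite ler_wpM2l ?invr_ge0 ?ler0n //; exact: sum_gpa_gap_le.
Qed.

End gpa_pathwise.

Section expectation_lemmas.
Local Open Scope ereal_scope.
Context {R : realType} {d : measure_display} {Omega : measurableType d}
  {P : probability Omega R}.

Lemma le_expectation (X Y : Omega -> R) : X \in Lfun P 1 -> Y \in Lfun P 1 ->
  (forall w, X w <= Y w)%R -> 'E_P[X] <= 'E_P[Y].
Proof.
move=> /Lfun1_integrable iX /Lfun1_integrable iY XY.
by rewrite unlock; apply: le_integral => // w _; rewrite lee_fin.
Qed.

Lemma Lfun_sum_nat (X : nat -> Omega -> R) (m k : nat) :
    (forall t, (m <= t < k)%N -> X t \in Lfun P 1) ->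
  (fun w => \sum_(m <= t < k) X t w)%R \in Lfun P 1.
Proof.
move=> iX; rewrite -[fun w => _](fct_sumE _ _ X) big_nat_cond.
by apply: rpred_sum => t; rewrite andbT; exact: iX.
Qed.

Lemma expectation_sum_nat (X : nat -> Omega -> R) (m k : nat) :
    (forall t, (m <= t < k)%N -> X t \in Lfun P 1) ->
  'E_P[fun w => (\sum_(m <= t < k) X t w)%R] = \sum_(m <= t < k) 'E_P[X t].
Proof.
move=> iX; rewrite -[fun w => _](fct_sumE _ _ X) -(big_map X xpredT id).
rewrite expectation_sum ?big_map // => _ /mapP[t + ->].
by rewrite mem_index_iota; exact: iX.
Qed.

End expectation_lemmas.

Theorem theorem1 (R : realType) (n : nat) (F : 'rV[R]_n -> R)
  (hconv : convex_fun F) (hdiff : forall x : 'rV[R]_n, differentiable F x)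
  (xs : 'rV[R]_n) (hmin : is_minimizer F xs)
  (d : measure_display) (Omega : measurableType d) (P : probability Omega R)
  (mux muy : R) (hmux : 0 <= mux < 1) (hmuy : 0 <= muy < 1)
  (T : nat) (hT : (0 < T)%N)
  (z : nat -> Omega -> 'rV[R]_n)
  (int_xbar : P.-integrable setT
     (EFin \o (fun w => F (gpa_xbar mux (z ^~ w) T) - F xs)))
  (int_x1 : P.-integrable setT
     (EFin \o (fun w => F (gpa_x mux (z ^~ w) 1) - F xs)))
  (int_dot : forall t, (1 <= t <= T)%N -> P.-integrable setT
     (EFin \o (fun w => dotp (grad F (gpa_y mux muy (z ^~ w) t)) (z t w - xs))))
  (int_Byx : forall t, (1 <= t <= T)%N -> P.-integrable setT
     (EFin \o (fun w => bregman F (gpa_y mux muy (z ^~ w) t) (gpa_x mux (z ^~ w) t))))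
  (int_Bxy : forall t, (1 <= t <= T)%N -> P.-integrable setT
     (EFin \o (fun w => bregman F (gpa_x mux (z ^~ w) t) (gpa_y mux muy (z ^~ w) t))))
  (int_Bxx : forall t, (1 <= t <= T)%N -> P.-integrable setT
     (EFin \o (fun w => bregman F (gpa_x mux (z ^~ w) t.-1) (gpa_x mux (z ^~ w) t)))) :
  ('E_P[fun w => (F (gpa_xbar mux (z ^~ w) T) - F xs)%R] <=
     (T%:R^-1)%:E *
       (\sum_(1 <= t < T.+1)
          'E_P[fun w => (dotp (grad F (gpa_y mux muy (z ^~ w) t)) (z t w - xs))%R])
   + (mux / (1 - mux) * T%:R^-1)%:E *
       'E_P[fun w => (F (gpa_x mux (z ^~ w) 1) - F xs)%R]
   - ((1 - muy)^-1 * T%:R^-1)%:E *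
       (\sum_(1 <= t < T.+1)
          'E_P[fun w => (bregman F (gpa_y mux muy (z ^~ w) t) (gpa_x mux (z ^~ w) t))%R])
   - (muy / (1 - muy) * T%:R^-1)%:E *
       (\sum_(1 <= t < T.+1)
          'E_P[fun w => (bregman F (gpa_x mux (z ^~ w) t) (gpa_y mux muy (z ^~ w) t))%R])
   - (mux / (1 - mux) * T%:R^-1)%:E *
       (\sum_(1 <= t < T.+1)
          'E_P[fun w => (bregman F (gpa_x mux (z ^~ w) t.-1) (gpa_x mux (z ^~ w) t))%R]))%E.
Proof.
have Lfun_of_integrable (f : nat -> Omega -> R) :
    (forall t, (1 <= t <= T)%N -> P.-integrable setT (EFin \o f t)) ->
  forall t, (1 <= t < T.+1)%N -> f t \in Lfun P 1.
  by move=> int_f t; rewrite ltnS => /int_f /Lfun1_integrable.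
have idot := Lfun_of_integrable _ int_dot.
have iByx := Lfun_of_integrable _ int_Byx.
have iBxy := Lfun_of_integrable _ int_Bxy.
have iBxx := Lfun_of_integrable _ int_Bxx.
move: int_x1 int_xbar => /Lfun1_integrable ix1 /Lfun1_integrable ixbar.
(* by linearity, the right-hand side is the expectation of the pathwise bound *)
rewrite -(expectation_sum_nat idot) -(expectation_sum_nat iByx).
rewrite -(expectation_sum_nat iBxy) -(expectation_sum_nat iBxx).
rewrite -!expectationZl ?Lfun_sum_nat //.
rewrite -expectationD ?Lfun_scale ?Lfun_sum_nat //.
(* [ix1] must precede [rpredB], which would split F (x^(1)) - F xs into
   separately non-integrable parts *)
rewrite -!expectationB ?(ix1, Lfun_scale, Lfun_sum_nat, rpredB, rpredD) //.
apply: le_expectation => //.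
  by rewrite ?(ix1, Lfun_scale, Lfun_sum_nat, rpredB, rpredD).
move=> w /=; have := gpa_pathwise_bound hconv hdiff hmin (z ^~ w) hmux hmuy hT.
lra.
Qed.
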